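(* For every integer $n\ge3$ there exists an irreducible $\lambda$-quiddity of size $n$ over the ring $\mathbb{Z}\times\mathbb{Z}$.
   Context: For $a_1,\ldots,a_n$ in a commutative unital ring $A$, $M_n(a_1,\ldots,a_n)=\begin{pmatrix}a_n&-1\\1&0\end{pmatrix}\cdots\begin{pmatrix}a_1&-1\\1&0\end{pmatrix}$. An $n$-tuple $(a_1,\ldots,a_n)\in A^n$ is a $\lambda$-quiddity over $A$ (of size $n$) if $M_n(a_1,\ldots,a_n)=\pm\mathrm{Id}$. For $(a_1,\ldots,a_n)\in A^n$, $(b_1,\ldots,b_m)\in A^m$, define $(a_1,\ldots,a_n)\oplus(b_1,\ldots,b_m)=(a_1+b_m,a_2,\ldots,a_{n-1},a_n+b_1,b_2,\ldots,b_{m-1})$. Write $(a_1,\ldots,a_n)\sim(b_1,\ldots,b_n)$ if $(b_1,\ldots,b_n)$ is obtained from $(a_1,\ldots,a_n)$ or from $(a_n,\ldots,a_1)$ by a cyclic permutation. A $\lambda$-quiddity $(c_1,\ldots,c_n)$ with $n\ge3$ is reducible if there exist a $\lambda$-quiddity $(b_1,\ldots,b_l)$ and a tuple $(a_1,\ldots,a_m)$ with $l,m\ge3$ and $(c_1,\ldots,c_n)\sim(a_1,\ldots,a_m)\oplus(b_1,\ldots,b_l)$; it is irreducible otherwise. *)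

From HB Require Import structures.
From mathcomp Require Import all_boot all_order all_algebra.
Set Implicit Arguments. Unset Strict Implicit. Unset Printing Implicit Defensive.
Import GRing.Theory.
Local Open Scope ring_scope.

Definition ZxZ : comNzRingType := (int * int)%type.

Definition qmat (A : comNzRingType) (a : A) : 'M[A]_2 :=
  \matrix_(i < 2, j < 2)
    (if (val i == 0%N) && (val j == 0%N) then a
     else if (val i == 0%N) then -1
     else if (val j == 0%N) then 1 else 0).

(* M_n(a_1,...,a_n) = qmat a_n * ... * qmat a_1 *)
Fixpoint Mq (A : comNzRingType) (s : seq A) : 'M[A]_2 :=
  match s with
  | [::] => 1%:M
  | a :: s' => Mq s' *m qmat a
  end.

Definition lambda_quiddity (A : comNzRingType) (s : seq A) : Prop :=
  Mq s = 1%:M \/ Mq s = - 1%:M.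

(* (a_1..a_n) (+) (b_1..b_m) = (a_1+b_m, a_2,..,a_{n-1}, a_n+b_1, b_2,..,b_{m-1}) *)
Definition qoplus (A : comNzRingType) (a b : seq A) : seq A :=
  [:: nth 0 a 0 + last 0 b] ++ drop 1 (take (size a).-1 a)
  ++ [:: last 0 a + nth 0 b 0] ++ drop 1 (take (size b).-1 b).

Definition qsim (A : Type) (a b : seq A) : Prop :=
  exists k, b = rot k a \/ b = rot k (rev a).

Definition reducible_quiddity (A : comNzRingType) (c : seq A) : Prop :=
  lambda_quiddity c /\ (3 <= size c)%N /\
  exists (b a : seq A), lambda_quiddity b /\ (3 <= size b)%N /\ (3 <= size a)%N /\
    qsim c (qoplus a b).

Definition irreducible_quiddity (A : comNzRingType) (c : seq A) : Prop :=
  lambda_quiddity c /\ (3 <= size c)%N /\ ~ reducible_quiddity c.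

From HB Require Import structures.
From mathcomp Require Import all_boot all_order all_algebra zify ring.
Import GRing.Theory.
Set Implicit Arguments. Unset Strict Implicit. Unset Printing Implicit Defensive.
Local Open Scope ring_scope.

(* Let z = (n-2, 1, 2, ..., 2, 1) be the quiddity of the triangulation of the
   n-gon by all diagonals from one vertex, and put c_i = (z_(i+1), z_i) in Z x Z.
   Both coordinates of c are rotations of z, so M_n(c) = -Id.  If c ~ a (+) b,
   the interior (b_2, ..., b_(l-1)) of the lambda-quiddity b is a cyclic block of
   c or of its reversal whose continuant (the top-left entry of its matrix) is
   +-1.  Continuants of cyclic blocks of z of length 1 .. n-3 are entries of the
   frieze of the triangulation, i.e. 2x2 minors of the vertex vectors of the
   polygon: they are >= 1, and equal to 1 only for blocks ending next to the fan
   vertex.  The two coordinates of c have their fan vertices at adjacent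
   positions, so no block of c has continuant (1,1) or (-1,-1). *)

Lemma big_ord2 (R : nmodType) (F : 'I_2 -> R) : \sum_(i < 2) F i = F ord0 + F (lift ord0 ord0).
Proof. by rewrite !big_ord_recl big_ord0 addr0. Qed.

Ltac case_ifs := repeat (case: ifP => ?; try (exfalso; lia)).

Ltac entrywise :=
  apply/matrixP; do 2 case=> [[|[|//]]] ?; rewrite !(mxE, big_ord2) /=.

Section Continuants.
Variable A : comNzRingType.
Implicit Types (s : seq A) (a x y : nat -> A).

Lemma Mq_rcons s b : Mq (rcons s b) = qmat b *m Mq s.
Proof. by elim: s => [|c s IH] /=; rewrite ?mul1mx ?mulmx1 // IH mulmxA. Qed.

Lemma Mq_cons_rcons11 s b1 bl : Mq (b1 :: rcons s bl) 1 1 = - Mq s 0 0.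
Proof. rewrite /= Mq_rcons !(mxE, big_ord2) /=; ring. Qed.

Lemma quiddity_inner00 s b1 bl : lambda_quiddity (b1 :: rcons s bl) ->
  Mq s 0 0 = 1 \/ Mq s 0 0 = -1.
Proof.
rewrite -[Mq s 0 0]opprK -(Mq_cons_rcons11 s b1 bl).
by case=> ->; rewrite !mxE /= ?opprK; [right | left].
Qed.

Definition Jmx : 'M[A]_2 := \matrix_(i < 2, j < 2)
  if val i == val j then (if val i == 0%N then 1 else -1) else 0.

Lemma JmxK : Jmx *m Jmx = 1%:M.
Proof. by entrywise; ring. Qed.

Lemma qmat_trJ b : Jmx *m (qmat b)^T *m Jmx = qmat b.
Proof. by entrywise; ring. Qed.

Lemma Mq_rev s : Mq (rev s) = Jmx *m (Mq s)^T *m Jmx.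
Proof.
elim: s => [|b s IH] /=; first by rewrite trmx1 mulmx1 JmxK.
by rewrite rev_cons Mq_rcons IH trmx_mul -{1}qmat_trJ !mulmxA -(mulmxA _ Jmx Jmx) JmxK mulmx1.
Qed.

Lemma Mq_rev00 s : Mq (rev s) 0 0 = Mq s 0 0.
Proof. by rewrite Mq_rev !(mxE, big_ord2) /=; ring. Qed.

(* Rows (x_i, y_i) and (x_(i-1), y_(i-1)) for two solutions of the recurrence
   u_(i+1) = a_i u_i - u_(i-1): multiplying by qmat a_i shifts i to i+1. *)
Definition solmx x y i : 'M[A]_2 := \matrix_(r < 2, c < 2)
  if val r == 0%N then (if val c == 0%N then x i else y i)
  else (if val c == 0%N then x i.-1 else y i.-1).

Definition solmx_adj x y i : 'M[A]_2 := \matrix_(r < 2, c < 2)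
  if val r == 0%N then (if val c == 0%N then y i.-1 else - y i)
  else (if val c == 0%N then - x i.-1 else x i).

Definition det2 x y p q := x p * y q - y p * x q.

Lemma solmxK x y i : solmx x y i *m solmx_adj x y i = (det2 x y i i.-1)%:M.
Proof. by entrywise; rewrite /det2; ring. Qed.

Lemma qmat_solmx a x y i :
  x i.+1 = a i * x i - x i.-1 -> y i.+1 = a i * y i - y i.-1 ->
  qmat (a i) *m solmx x y i = solmx x y i.+1.
Proof. by move=> ex ey; entrywise; rewrite ?ex ?ey; ring. Qed.

Lemma Mq_solmx a x y j L :
  (forall i, (j <= i < j + L)%N ->
     x i.+1 = a i * x i - x i.-1 /\ y i.+1 = a i * y i - y i.-1) ->
  Mq (mkseq (fun i => a (j + i)%N) L) *m solmx x y j = solmx x y (j + L)%N.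
Proof.
elim: L => [|L IH] rec; first by rewrite mul1mx addn0.
have /rec [ex ey] : (j <= j + L < j + L.+1)%N by lia.
rewrite mkseqS Mq_rcons -mulmxA IH ?qmat_solmx // ?addnS // => i ?.
by apply: rec; lia.
Qed.

Lemma Mq_solmx00 a x y j L :
  (forall i, (j <= i < j + L)%N ->
     x i.+1 = a i * x i - x i.-1 /\ y i.+1 = a i * y i - y i.-1) ->
  Mq (mkseq (fun i => a (j + i)%N) L) 0 0 * det2 x y j j.-1 = det2 x y (j + L)%N j.-1.
Proof.
move/Mq_solmx/(congr1 (fun M => (M *m solmx_adj x y j) 0 0)).
rewrite -mulmxA solmxK mul_mx_scalar !(mxE, big_ord2) /= => e.
by rewrite mulrC e /det2; ring.
Qed.

Lemma mulmx_solmx_opp M x y i :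
  det2 x y i i.-1 = -1 -> M *m solmx x y i = - solmx x y i -> M = - 1%:M.
Proof.
move=> d /(congr1 (mulmx^~ (solmx_adj x y i))).
by rewrite -mulmxA mulNmx solmxK d mul_mx_scalar scaleN1r raddfN => /oppr_inj.
Qed.

End Continuants.

Section MorphismImage.
Variables (A B : comNzRingType) (f : {rmorphism A -> B}).

Lemma qmat_map b : map_mx f (qmat b) = qmat (f b).
Proof. by entrywise; rewrite ?rmorphN1 ?rmorph1 ?rmorph0. Qed.

Lemma Mq_map s : map_mx f (Mq s) = Mq (map f s).
Proof. by elim: s => [|b s IH] /=; rewrite ?map_mx1 // map_mxM IH qmat_map. Qed.

End MorphismImage.

Lemma infix_rot (T : eqType) k (s : seq T) : infix (rot k s) (s ++ s).
Proof.
have -> : s ++ s = take k s ++ rot k s ++ drop k s.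
  by rewrite /rot !catA cat_take_drop -catA cat_take_drop.
exact: infix_infix.
Qed.

Lemma infix_mkseq (T : eqType) (f : nat -> T) m t : infix t (mkseq f m) ->
  exists2 q, (q + size t <= m)%N & t = mkseq (fun i => f (q + i)%N) (size t).
Proof.
case/infixP=> [s [s' e]]; have := congr1 size e; rewrite size_mkseq !size_cat => sz.
exists (size s); first by lia.
apply: (@eq_from_nth _ (f 0%N)) => [|i lt]; first by rewrite size_mkseq.
rewrite nth_mkseq // -[RHS](@nth_mkseq _ (f 0%N) f m); last by lia.
by rewrite e nth_cat ifF ?addKn ?nth_cat ?lt //; lia.
Qed.

Lemma split_ends (T : Type) (x0 : T) (b : seq T) : (2 <= size b)%N ->
  b = nth x0 b 0 :: rcons (drop 1 (take (size b).-1 b)) (last x0 b).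
Proof.
case: b => [|x s] //=; case/lastP: s => [|s y] //= _.
by rewrite size_rcons /= drop0 last_rcons -cats1 take_size_cat // cats1.
Qed.

Lemma reducible_inner_block (A : comNzRingType) (c : seq A) : reducible_quiddity c ->
  exists2 t : seq A, infix t (c ++ c) &
    [/\ (0 < size t)%N, (size t + 3 <= size c)%N & Mq t 0 0 = 1 \/ Mq t 0 0 = -1].
Proof.
case=> _ [_ [b [a [qb [sb [sa [k ek]]]]]]].
set t := drop 1 (take (size b).-1 b).
have st : size t = (size b - 2)%N by rewrite size_drop size_take; case: ifP; lia.
have t00 : Mq t 0 0 = 1 \/ Mq t 0 0 = -1.
  by move: qb; rewrite {1}(split_ends 0 (_ : 2 <= size b)%N) ?(ltnW sb) // => /quiddity_inner00.
pose h := nth 0 a 0 + last 0 b :: drop 1 (take (size a).-1 a) ++ [:: last 0 a + nth 0 b 0].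
have eab : qoplus a b = h ++ t by rewrite /qoplus /= -catA.
have sh : size h = size a by rewrite /= size_cat size_drop size_take; case: ifP => /=; lia.
clearbody t h.
have sc : size c = (size a + size t)%N.
  by rewrite -sh -size_cat -eab; case: ek => ->; rewrite size_rot ?size_rev.
have tab : infix t (qoplus a b) by rewrite eab suffix_infix.
case: ek => ek; rewrite ek in tab.
  by exists t; [exact: infix_trans tab (infix_rot _ _) | split => //; lia].
exists (rev t); last by rewrite size_rev Mq_rev00; split => //; lia.
by rewrite infix_revLR rev_cat; exact: infix_trans tab (infix_rot _ _).
Qed.

Lemma modn_lt_double n i : (i < 2 * n)%N -> (i %% n = if i < n then i else i - n)%N.
Proof.
move=> lt; case: ltnP => [|le]; first exact: modn_small.
by rewrite -{1}(subnK le) modnDr modn_small //; lia.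
Qed.

Definition fan (n i : nat) : int :=
  let r := (i %% n)%N in
  if r == 0%N then n%:Z - 2 else if (r == 1%N) || (r == n.-1) then 1 else 2.

Lemma fan_periodic n i : fan n (i + n)%N = fan n i.
Proof. by rewrite /fan modnDr. Qed.

(* v_i = (fanX n i, fanY n i), 0 <= i <= 2n, are the vertices of the polygon
   realising the frieze of fan n: v_(i+1) = fan n i * v_i - v_(i-1) and
   v_(i+n) = - v_i, with det(v_p, v_q) the frieze entry between p and q. *)
Definition fanX (n i : nat) : int :=
  if i == 0%N then 0 else if (i < n)%N then 1 else if i == n then 0
  else if (i < 2 * n)%N then -1 else 0.

Definition fanY (n i : nat) : int :=
  if i == 0%N then -1 else if (i < n)%N then i%:Z else if i == n then 1
  else if (i < 2 * n)%N then - (i - n)%N%:Z else -1.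

Lemma fan_rec n i : (3 <= n)%N -> (0 < i < 2 * n)%N ->
  fanX n i.+1 = fan n i * fanX n i - fanX n i.-1 /\
  fanY n i.+1 = fan n i * fanY n i - fanY n i.-1.
Proof.
move=> *; rewrite /fan /= modn_lt_double; last by lia.
by case: ltnP => ?; rewrite /fanX /fanY /=; case_ifs; lia.
Qed.

Lemma fan_det n i : (3 <= n)%N -> (0 < i <= 2 * n)%N ->
  det2 (fanX n) (fanY n) i i.-1 = -1.
Proof. by move=> *; rewrite /det2 /fanX /fanY; case_ifs; lia. Qed.

Lemma fan_antiperiodic n i : (0 < n)%N -> (i <= n)%N ->
  fanX n (i + n)%N = - fanX n i /\ fanY n (i + n)%N = - fanY n i.
Proof. by move=> *; rewrite /fanX /fanY; case_ifs; lia. Qed.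

Lemma fan_frieze n p k : (3 <= n)%N -> (p < n)%N -> (2 <= k <= n - 2)%N ->
  1 <= det2 (fanX n) (fanY n) p (p + k)%N /\
  (det2 (fanX n) (fanY n) p (p + k)%N = 1 -> p = 0%N \/ (p + k = n)%N).
Proof. by move=> *; rewrite /det2 /fanX /fanY; case_ifs; lia. Qed.

Definition fan_block (n p L : nat) : seq int := mkseq (fun i => fan n (p + i)%N) L.

Lemma fan_continuant n p L : (3 <= n)%N -> (0 < p <= n)%N -> (0 < L <= n - 3)%N ->
  1 <= Mq (fan_block n p L) 0 0 /\
  (Mq (fan_block n p L) 0 0 = 1 -> p = 1%N \/ (p + L = n)%N).
Proof.
move=> n3 p1 L1.
have e : Mq (fan_block n p L) 0 0 * det2 (fanX n) (fanY n) p p.-1 =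
         det2 (fanX n) (fanY n) (p + L)%N p.-1.
  by apply: Mq_solmx00 => i ?; apply: fan_rec; lia.
rewrite fan_det in e; [|lia|lia].
have -> : Mq (fan_block n p L) 0 0 = det2 (fanX n) (fanY n) p.-1 (p + L)%N.
  by apply: oppr_inj; rewrite -mulrN1 e /det2; ring.
have [ge1 eq1] := @fan_frieze n p.-1 L.+1 n3 ltac:(lia) ltac:(lia).
rewrite (_ : (p.-1 + L.+1 = p + L)%N) in ge1 eq1; last by lia.
by split => // /eq1; lia.
Qed.

Lemma Mq_fan n p : (3 <= n)%N -> (0 < p <= n)%N -> Mq (fan_block n p n) = - 1%:M.
Proof.
move=> n3 p1; apply: (@mulmx_solmx_opp _ _ (fanX n) (fanY n) p).
  by apply: fan_det; lia.
rewrite Mq_solmx => [|i ?]; last by apply: fan_rec; lia.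
have [x1 y1] := @fan_antiperiodic n p ltac:(lia) ltac:(lia).
have [x2 y2] := @fan_antiperiodic n p.-1 ltac:(lia) ltac:(lia).
have pred_pn : (p + n).-1 = (p.-1 + n)%N by lia.
by apply/matrixP; do 2 case=> [[|[|//]]] ?; rewrite !mxE /= ?pred_pn ?x1 ?y1 ?x2 ?y2.
Qed.

Lemma mkseq_periodic_cat (T : Type) (f : nat -> T) n : (forall i, f (i + n)%N = f i) ->
  mkseq f n ++ mkseq f n = mkseq f (n + n)%N.
Proof.
move=> per; have shift : iota n n = map (addn n) (iota 0 n) by rewrite -iotaDl addn0.
rewrite /mkseq iotaD map_cat add0n shift -map_comp.
by congr (_ ++ _); apply: eq_map => i /=; rewrite addnC per.
Qed.

Lemma Mq_pair (s : seq ZxZ) i j : Mq s i j = (Mq (map fst s) i j, Mq (map snd s) i j).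
Proof. by rewrite -!Mq_map !mxE; case: (Mq s i j). Qed.

Definition fan_pair n i : ZxZ := (fan n i.+1, fan n i).

Lemma fan_pair_periodic n i : fan_pair n (i + n)%N = fan_pair n i.
Proof. by rewrite /fan_pair -addSn !fan_periodic. Qed.

Lemma Mq_fan_pair n : (3 <= n)%N -> Mq (mkseq (fan_pair n) n) = - 1%:M.
Proof.
move=> n3; apply/matrixP => i j; rewrite Mq_pair.
have -> : map fst (mkseq (fan_pair n) n) = fan_block n 1 n.
  by rewrite /fan_block /mkseq -map_comp; apply: eq_map => k; rewrite /= add1n.
have -> : map snd (mkseq (fan_pair n) n) = fan_block n n n.
  by rewrite /fan_block /mkseq -map_comp; apply: eq_map => k; rewrite /= addnC fan_periodic.
rewrite !Mq_fan; try lia.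
by rewrite !mxE; case: (i == j).
Qed.

Lemma fan_pair_block n t : (3 <= n)%N ->
  infix t (mkseq (fan_pair n) n ++ mkseq (fan_pair n) n) ->
  (0 < size t)%N -> (size t + 3 <= n)%N -> Mq t 0 0 <> 1 /\ Mq t 0 0 <> -1.
Proof.
move=> n3; rewrite mkseq_periodic_cat; last exact: fan_pair_periodic.
case/infix_mkseq=> q qL et t0 tn; rewrite et; set L := size t in qL t0 tn *; clearbody L.
have [r rn er] : exists2 r, (r < n)%N &
    mkseq (fun i => fan_pair n (q + i)%N) L = mkseq (fun i => fan_pair n (r + i)%N) L.
  case: (ltnP q n) => qn; first by exists q.
  exists (q - n)%N; first by lia.
  by apply: eq_mkseq => i; rewrite -[RHS]fan_pair_periodic; congr fan_pair; lia.
have [p1 [p2 [p1n p2n p12 e1 e2]]] : exists p1 p2, [/\ (0 < p1 <= n)%N, (0 < p2 <= n)%N,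
    p1 = p2.+1 \/ (p1 = 1 /\ p2 = n)%N,
    map fst (mkseq (fun i => fan_pair n (r + i)%N) L) = fan_block n p1 L &
    map snd (mkseq (fun i => fan_pair n (r + i)%N) L) = fan_block n p2 L].
  rewrite /fan_block /mkseq -!map_comp.
  case: r rn {er} => [|r] rn; [exists 1%N, n | exists r.+2, r.+1];
    split; try lia; apply: eq_map => i /=;
    by rewrite ?add0n ?add1n ?addSn // addnC fan_periodic.
have [g1 h1] := @fan_continuant n p1 L n3 p1n ltac:(lia).
have [g2 h2] := @fan_continuant n p2 L n3 p2n ltac:(lia).
rewrite er Mq_pair e1 e2; split=> [[/h1 ? /h2 ?] | [K1 _]]; first by lia.
by move: g1; rewrite K1.
Qed.

Theorem corollary2p9 :
  forall n : nat, (3 <= n)%N ->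
    exists c : seq ZxZ, size c = n /\ irreducible_quiddity c.
Proof.
move=> n n3; exists (mkseq (fan_pair n) n); rewrite !size_mkseq.
split=> //; split; first by right; exact: Mq_fan_pair.
split; first by rewrite size_mkseq.
case/reducible_inner_block=> t tc [t0 tn t00].
have [] := fan_pair_block n3 tc t0; first by rewrite size_mkseq in tn.
by case: t00.
Qed.
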